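(* Let $f:[0,1]\times\mathbb{R}\rightarrow\mathbb{R}$ be continuous and assume there exists $\varphi\in\Phi$ such that: (K1) $0\leq f(t,b)-f(t,a)\leq9\sqrt{3}\,\varphi(b-a)$ for all $t\in[0,1]$ and all $a,b\in\mathbb{R}$ with $a\leq b$; (K2) there exists $x_{0}\in C([0,1])$ such that $x_{0}(t)\leq\int_{0}^{1}G(t,s)f(s,x_{0}(s))\,\mathrm{d}s$ for all $t\in[0,1]$. Then the boundary value problem \[ x'''(t)+f(t,x(t))=0,\ t\in(0,1),\qquad x(0)=x(1)=x''(0)=0 \] has a unique solution.
   Context: $C([0,1])$ denotes real continuous functions on $[0,1]$. $G(t,s)=\frac12(1-t)(t-s^2)$ for $0\leq s\leq t\leq1$ and $G(t,s)=\frac12 t(1-s)^2$ for $0\leq t\leq s\leq1$. $\Phi$ is the set of all nondecreasing functions $\varphi:[0,+\infty)\rightarrow[0,+\infty)$ such that for every $\varepsilon>0$ there exists $\delta(\varepsilon)>0$ with $\varepsilon\leq t<\varepsilon+\delta(\varepsilon)\Rightarrow\varphi(t)<\varepsilon$. *)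

From Stdlib Require Import Reals.
From Coquelicot Require Import Coquelicot.
Open Scope R_scope.

Definition G (t s : R) : R :=
  if Rle_dec s t then / 2 * (1 - t) * (t - s ^ 2)
  else / 2 * t * (1 - s) ^ 2.

Definition in_Phi (phi : R -> R) : Prop :=
  (forall t, 0 <= t -> 0 <= phi t) /\
  (forall s t, 0 <= s -> s <= t -> phi s <= phi t) /\
  (forall eps, 0 < eps -> exists delta, 0 < delta /\
     forall t, eps <= t -> t < eps + delta -> phi t < eps).

Definition cont01 (g : R -> R) : Prop :=
  forall t, 0 <= t <= 1 -> forall eps, 0 < eps -> exists delta, 0 < delta /\
    forall t', 0 <= t' <= 1 -> Rabs (t' - t) < delta -> Rabs (g t' - g t) < eps.

Definition cont01xR (f : R -> R -> R) : Prop :=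
  forall t y, 0 <= t <= 1 -> forall eps, 0 < eps -> exists delta, 0 < delta /\
    forall t' y', 0 <= t' <= 1 -> Rabs (t' - t) < delta -> Rabs (y' - y) < delta ->
      Rabs (f t' y' - f t y) < eps.

(* x is a (classical, C^3[0,1]) solution of
     x'''(t) + f(t,x(t)) = 0 on (0,1),  x(0) = x(1) = x''(0) = 0.
   x1, x2, x3 are the first three derivatives of x on (0,1), each extended
   continuously to [0,1]; x''(0) is understood as x2 0. *)
Definition is_solution (f : R -> R -> R) (x : R -> R) : Prop :=
  exists x1 x2 x3 : R -> R,
    cont01 x /\ cont01 x1 /\ cont01 x2 /\ cont01 x3 /\
    (forall t, 0 < t < 1 -> is_derive x t (x1 t)) /\
    (forall t, 0 < t < 1 -> is_derive x1 t (x2 t)) /\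
    (forall t, 0 < t < 1 -> is_derive x2 t (x3 t)) /\
    (forall t, 0 < t < 1 -> x3 t + f t (x t) = 0) /\
    x 0 = 0 /\ x 1 = 0 /\ x2 0 = 0.

(* Integrating x''' = -f(t,x) three times against the boundary conditions shows that the
   solutions are exactly the continuous fixed points of (T x)(t) = int_0^1 G(t,s) f(s,x(s)) ds;
   conversely, splitting this integral at s = t writes T x through primitives of f(.,x(.)),
   which can be differentiated three times.  Since int_0^1 G(t,s) ds = (t - t^3)/6 never exceeds
   1/(9 sqrt 3), (K1) gives |T x - T y| <= phi(r) whenever |x - y| <= r uniformly on [0,1]: T is a
   Meir-Keeler contraction of C([0,1]).  Such a map has a unique fixed point: a nonempty set of
   nonnegative reals stable under phi has infimum 0, which makes the Picard steps arbitrarily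
   small, the Meir-Keeler condition then makes the iterates uniformly Cauchy, and their uniform
   limit is the fixed point. *)

From Stdlib Require Import Reals Lra Classical.
From Coquelicot Require Import Coquelicot.
Open Scope R_scope.

Definition clamp (t : R) : R := Rmax 0 (Rmin 1 t).

Lemma clamp_in01 t : 0 <= clamp t <= 1.
Proof. unfold clamp, Rmax, Rmin; repeat destruct Rle_dec; lra. Qed.

Lemma clamp_id t : 0 <= t <= 1 -> clamp t = t.
Proof. unfold clamp, Rmax, Rmin; repeat destruct Rle_dec; lra. Qed.

Lemma clamp_1lip a b : Rabs (clamp a - clamp b) <= Rabs (a - b).
Proof.
  unfold clamp, Rmax, Rmin; repeat destruct Rle_dec;
  unfold Rabs; repeat destruct Rcase_abs; lra.
Qed.

Lemma cont01_continuous_clamp g : cont01 g -> forall t, continuous (fun s => g (clamp s)) t.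
Proof.
  intros Hg t. apply continuity_pt_filterlim, continuity_pt_locally. intros eps.
  destruct (Hg (clamp t) (clamp_in01 t) eps (cond_pos eps)) as [d [Hd H]].
  exists (mkposreal d Hd). intros y Hy. apply H; [apply clamp_in01|].
  pose proof (clamp_1lip y t). change (Rabs (y - t) < d) in Hy. lra.
Qed.

Lemma continuous_cont01 h : (forall t, 0 <= t <= 1 -> continuous h t) -> cont01 h.
Proof.
  intros Hh t Ht eps He.
  pose proof (proj1 (continuity_pt_locally h t) (proj2 (continuity_pt_filterlim h t) (Hh t Ht)))
    as Hloc.
  destruct (Hloc (mkposreal eps He)) as [d Hd].
  exists d. split; [apply cond_pos|]. intros t' _ Ht'. exact (Hd t' Ht').
Qed.

Lemma cont01_ext g h : cont01 g -> (forall t, 0 <= t <= 1 -> g t = h t) -> cont01 h.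
Proof.
  intros Hg E t Ht eps He. destruct (Hg t Ht eps He) as [d [Hd H]].
  exists d. split; auto. intros t' Ht' H'. rewrite <- !E; auto.
Qed.

Lemma cont01_compose f x : cont01xR f -> cont01 x -> cont01 (fun s => f s (x s)).
Proof.
  intros Hf Hx t Ht eps He.
  destruct (Hf t (x t) Ht eps He) as [d1 [Hd1 H1]].
  destruct (Hx t Ht d1 Hd1) as [d2 [Hd2 H2]].
  exists (Rmin d1 d2). split; [apply Rmin_glb_lt; auto|].
  intros t' Ht' H'. pose proof (Rmin_l d1 d2). pose proof (Rmin_r d1 d2).
  apply H1; auto; [lra|]. apply H2; auto. lra.
Qed.

Lemma cont01_minus a b : cont01 a -> (forall t, continuous b t) -> cont01 (fun t => a t - b t).
Proof.
  intros Ha Hb. apply (cont01_ext (fun t => a (clamp t) - b t)).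
  - apply continuous_cont01. intros t _.
    apply (continuous_minus (fun t => a (clamp t)) b); [apply cont01_continuous_clamp|]; auto.
  - intros. rewrite clamp_id; auto.
Qed.

Lemma cont01_bounded g : cont01 g -> exists M, forall t, 0 <= t <= 1 -> Rabs (g t) <= M.
Proof.
  intros Hg.
  assert (Hc : forall h : R -> R, (forall t, continuous h t) ->
            forall c, 0 <= c <= 1 -> continuity_pt h c).
  { intros h Hh c _. apply continuity_pt_filterlim, Hh. }
  pose proof (cont01_continuous_clamp g Hg) as Hgc.
  destruct (continuity_ab_maj _ 0 1 Rle_0_1 (Hc _ Hgc)) as [a [Ha _]].
  destruct (continuity_ab_maj (fun s => - g (clamp s)) 0 1 Rle_0_1
              (Hc _ (fun t => continuous_opp _ t (Hgc t)))) as [b [Hb _]].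
  exists (Rmax (g (clamp a)) (- g (clamp b))). intros t Ht.
  specialize (Ha t Ht). specialize (Hb t Ht). cbv beta in Ha, Hb.
  rewrite (clamp_id t Ht) in Ha, Hb. apply Rabs_le.
  pose proof (Rmax_l (g (clamp a)) (- g (clamp b))).
  pose proof (Rmax_r (g (clamp a)) (- g (clamp b))). lra.
Qed.

Definition dist01_le (x y : R -> R) (r : R) : Prop :=
  forall s, 0 <= s <= 1 -> Rabs (x s - y s) <= r.

Lemma dist01_le_sym x y r : dist01_le x y r -> dist01_le y x r.
Proof. intros H s Hs. rewrite Rabs_minus_sym. auto. Qed.

Lemma dist01_le_trans x y z r r' :
  dist01_le x y r -> dist01_le y z r' -> dist01_le x z (r + r').
Proof.
  intros H H' s Hs. specialize (H s Hs). specialize (H' s Hs).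
  pose proof (Rabs_triang (x s - y s) (y s - z s)).
  replace (x s - y s + (y s - z s)) with (x s - z s) in * by ring. lra.
Qed.

Lemma dist01_le_weaken x y r r' : dist01_le x y r -> r <= r' -> dist01_le x y r'.
Proof. intros H Hr s Hs. specialize (H s Hs). lra. Qed.

Lemma dist01_le_refl x : dist01_le x x 0.
Proof. intros s _. rewrite Rminus_diag, Rabs_R0. lra. Qed.

Lemma cont01_dist01_bounded x y : cont01 x -> cont01 y ->
  exists r, 0 <= r /\ dist01_le x y r.
Proof.
  intros Hx Hy. destruct (cont01_bounded x Hx) as [M1 HM1].
  destruct (cont01_bounded y Hy) as [M2 HM2].
  exists (Rabs M1 + Rabs M2). split; [pose proof (Rabs_pos M1); pose proof (Rabs_pos M2); lra|].
  intros s Hs. specialize (HM1 s Hs). specialize (HM2 s Hs).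
  pose proof (Rabs_triang (x s) (- y s)). rewrite Rabs_Ropp in *.
  pose proof (Rle_abs M1). pose proof (Rle_abs M2). unfold Rminus. lra.
Qed.

Lemma dist01_le_arbitrarily_small x y : (forall e, 0 < e -> dist01_le x y e) ->
  forall t, 0 <= t <= 1 -> x t = y t.
Proof.
  intros H t Ht. apply Rminus_diag_uniq. apply Rabs_eq_0.
  apply Rle_antisym; [|apply Rabs_pos]. apply Rle_plus_epsilon.
  intros e He. rewrite Rplus_0_l. exact (H e He t Ht).
Qed.

Lemma cont01_uniform_limit x : (forall e, 0 < e -> exists y, cont01 y /\ dist01_le y x e) ->
  cont01 x.
Proof.
  intros H t Ht eps He. destruct (H (eps / 3) ltac:(lra)) as [y [Cy Hy]].
  destruct (Cy t Ht (eps / 3) ltac:(lra)) as [d [Hd Hyd]].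
  exists d. split; auto. intros t' Ht' Htt.
  specialize (Hyd t' Ht' Htt). pose proof (Hy t Ht). pose proof (Hy t' Ht').
  pose proof (Rabs_triang (x t' - y t') (y t' - x t)).
  pose proof (Rabs_triang (y t' - y t) (y t - x t)).
  replace (x t' - y t' + (y t' - x t)) with (x t' - x t) in * by ring.
  replace (y t' - y t + (y t - x t)) with (y t' - x t) in * by ring.
  rewrite Rabs_minus_sym in H1. lra.
Qed.

Definition pointwise_lim (u : nat -> R -> R) (t : R) : R := real (Lim_seq (fun n => u n t)).

Lemma uniform_cauchy_converges (u : nat -> R -> R) :
  (forall e, 0 < e -> exists N, forall n m, (N <= n)%nat -> (N <= m)%nat ->
     dist01_le (u n) (u m) e) ->
  forall e, 0 < e -> exists N, forall n, (N <= n)%nat -> dist01_le (u n) (pointwise_lim u) e.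
Proof.
  intros Hc e He. destruct (Hc e He) as [N HN]. exists N. intros n Hn s Hs.
  assert (Hl : is_lim_seq (fun n => u n s) (pointwise_lim u s)).
  { apply Lim_seq_correct', ex_lim_seq_cauchy_corr. intros eps.
    destruct (Hc (eps / 2)) as [M HM]; [destruct eps; simpl; lra|].
    exists M. intros p q Hp Hq. specialize (HM p q Hp Hq s Hs). destruct eps; simpl in *; lra. }
  apply is_lim_seq_spec in Hl.
  apply Rle_plus_epsilon. intros eps Heps. destruct (Hl (mkposreal eps Heps)) as [M HM].
  specialize (HM (max M N) (Nat.le_max_l _ _)). simpl in HM.
  specialize (HN n (max M N) Hn (Nat.le_max_r _ _) s Hs).
  pose proof (Rabs_triang (u n s - u (max M N) s) (u (max M N) s - pointwise_lim u s)).
  replace (u n s - u (max M N) s + (u (max M N) s - pointwise_lim u s))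
    with (u n s - pointwise_lim u s) in * by ring.
  lra.
Qed.

Section PhiClass.
Variable phi : R -> R.
Hypothesis Hphi : in_Phi phi.

Lemma Phi_nonneg t : 0 <= t -> 0 <= phi t.
Proof. destruct Hphi as [H _]. auto. Qed.

Lemma Phi_le s t : 0 <= s -> s <= t -> phi s <= phi t.
Proof. destruct Hphi as [_ [H _]]. auto. Qed.

Lemma Phi_lt t : 0 < t -> phi t < t.
Proof.
  intros Ht. destruct Hphi as [_ [_ H]]. destruct (H t Ht) as [d [Hd H']]. apply H'; lra.
Qed.

(* If the infimum i of P were positive, some r in P would lie in [i, i + delta(i)), and then
   phi r < i would contradict phi r in P. *)
Lemma Phi_stable_set_arbitrarily_small (P : R -> Prop) :
  (exists r0, P r0) -> (forall r, P r -> 0 <= r) -> (forall r, P r -> P (phi r)) ->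
  forall eta, 0 < eta -> exists r, P r /\ r < eta.
Proof.
  intros [r0 Hr0] Hpos Hstab.
  set (E := fun x => P (- x)).
  assert (Hb : bound E) by (exists 0; intros x Hx; apply Hpos in Hx; lra).
  assert (Hne : exists x, E x) by (exists (- r0); unfold E; rewrite Ropp_involutive; auto).
  destruct (completeness E Hb Hne) as [m [Hub Hlub]].
  assert (Hlb : forall r, P r -> - m <= r).
  { intros r Hr. assert (- r <= m) by (apply Hub; unfold E; rewrite Ropp_involutive; auto). lra. }
  assert (Happrox : forall e, - m < e -> exists r, P r /\ r < e).
  { intros e He. apply NNPP. intros Hn.
    assert (m <= - e); [|lra].
    apply Hlub. intros x Hx. apply NNPP. intros Hx'.
    apply Hn. exists (- x). split; [exact Hx | lra]. }
  assert (Hm : - m <= 0).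
  { apply Rnot_lt_le. intros Hm. destruct Hphi as [_ [_ Hmk]].
    destruct (Hmk (- m) Hm) as [d [Hd Hd']].
    destruct (Happrox (- m + d) ltac:(lra)) as [r [Hr Hrd]].
    pose proof (Hd' r (Hlb r Hr) Hrd). pose proof (Hlb _ (Hstab r Hr)). lra. }
  intros eta Heta. apply Happrox. lra.
Qed.

Lemma Phi_increment_bound (h : R -> R) L a b r : 0 <= L ->
  (forall a b, a <= b -> 0 <= h b - h a <= L * phi (b - a)) ->
  Rabs (a - b) <= r -> Rabs (h a - h b) <= L * phi r.
Proof.
  intros HL Hh Hab.
  assert (Hmono : forall u, 0 <= u <= r -> L * phi u <= L * phi r)
    by (intros u Hu; apply Rmult_le_compat_l; [lra | apply Phi_le; lra]).
  apply Rabs_le_between in Hab. apply Rabs_le.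
  destruct (Rle_dec a b) as [Hle | Hlt].
  - pose proof (Hh a b Hle). pose proof (Hmono (b - a) ltac:(lra)). lra.
  - pose proof (Hh b a ltac:(lra)). pose proof (Hmono (a - b) ltac:(lra)). lra.
Qed.

Section MeirKeeler.
Variable T : (R -> R) -> (R -> R).
Hypothesis T_cont01 : forall x, cont01 x -> cont01 (T x).
Hypothesis T_contraction : forall x y r, cont01 x -> cont01 y -> 0 <= r ->
  dist01_le x y r -> dist01_le (T x) (T y) (phi r).

Lemma fixed_point_unique x y : cont01 x -> cont01 y ->
  (forall t, 0 <= t <= 1 -> x t = T x t) -> (forall t, 0 <= t <= 1 -> y t = T y t) ->
  forall t, 0 <= t <= 1 -> x t = y t.
Proof.
  intros Cx Cy Fx Fy. apply dist01_le_arbitrarily_small. intros e He.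
  destruct (Phi_stable_set_arbitrarily_small (fun r => 0 <= r /\ dist01_le x y r)) with e
    as [r [[_ Hr] Hre]]; auto.
  - apply cont01_dist01_bounded; auto.
  - intros r [Hr _]; auto.
  - intros r [Hr Hxy]. split; [apply Phi_nonneg; auto|].
    intros s Hs. rewrite Fx, Fy by auto. apply T_contraction; auto.
  - apply (dist01_le_weaken _ _ _ _ Hr). lra.
Qed.

Section Iterates.
Variable x0 : R -> R.
Hypothesis Cx0 : cont01 x0.

Let iterate n := Nat.iter n T x0.

Lemma iterate_cont01 n : cont01 (iterate n).
Proof. induction n; [exact Cx0 | apply T_cont01; exact IHn]. Qed.

Lemma iterate_contraction n m r : 0 <= r -> dist01_le (iterate n) (iterate m) r ->
  dist01_le (iterate (S n)) (iterate (S m)) (phi r).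
Proof. intros Hr H. apply T_contraction; auto using iterate_cont01. Qed.

Lemma iterate_steps_small eta : 0 < eta ->
  exists N, forall m, (N <= m)%nat -> dist01_le (iterate m) (iterate (S m)) eta.
Proof.
  intros Heta.
  destruct (Phi_stable_set_arbitrarily_small
    (fun r => 0 <= r /\ exists n, dist01_le (iterate n) (iterate (S n)) r)) with eta
    as [r [[_ [N HN]] Hr]]; auto.
  - destruct (cont01_dist01_bounded _ _ (iterate_cont01 0) (iterate_cont01 1)) as [r Hr].
    exists r. split; [apply Hr|]. exists O. apply Hr.
  - intros r [H _]; auto.
  - intros r [Hr [n Hn]]. split; [apply Phi_nonneg; auto|].
    exists (S n). apply iterate_contraction; auto.
  - exists N. intros m Hm. induction Hm as [|m Hm IHm].
    + apply (dist01_le_weaken _ _ _ _ HN). lra.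
    + apply (dist01_le_weaken _ _ _ _ (iterate_contraction _ _ _ (Rlt_le _ _ Heta) IHm)).
      pose proof (Phi_lt eta Heta). lra.
Qed.

(* Once the steps are below d'/2 with d' <= delta(e), the Meir-Keeler condition keeps every
   later iterate within e + d'/2 of the current one. *)
Lemma iterate_uniform_cauchy e : 0 < e -> exists N, forall n m, (N <= n)%nat -> (N <= m)%nat ->
  dist01_le (iterate n) (iterate m) (3 * e).
Proof.
  intros He. destruct Hphi as [_ [_ Hmk]]. destruct (Hmk e He) as [d [Hd Hd']].
  set (d' := Rmin d e). assert (Hd'0 : 0 < d') by (apply Rmin_glb_lt; auto).
  assert (d' <= d) by apply Rmin_l. assert (d' <= e) by apply Rmin_r.
  destruct (iterate_steps_small (d' / 2) ltac:(lra)) as [N HN].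
  assert (Hk : forall k, dist01_le (iterate N) (iterate (N + k)) (e + d' / 2)).
  { induction k.
    - rewrite Nat.add_0_r. apply (dist01_le_weaken _ _ _ _ (dist01_le_refl _)). lra.
    - rewrite Nat.add_succ_r.
      pose proof (iterate_contraction _ _ (e + d' / 2) ltac:(lra) IHk) as H1.
      assert (H2 : phi (e + d' / 2) < e) by (apply Hd'; lra).
      apply (dist01_le_weaken _ _ _ _ (dist01_le_trans _ _ _ _ _ (HN N (le_n _)) H1)). lra. }
  exists N. intros n m Hn Hm.
  destruct (Nat.le_exists_sub N n Hn) as [a [-> _]].
  destruct (Nat.le_exists_sub N m Hm) as [b [-> _]].
  rewrite !(Nat.add_comm _ N).
  apply (dist01_le_weaken _ _ _ _
           (dist01_le_trans _ _ _ _ _ (dist01_le_sym _ _ _ (Hk a)) (Hk b))). lra.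
Qed.

Lemma iterate_converges e : 0 < e -> exists N, forall n, (N <= n)%nat ->
  dist01_le (iterate n) (pointwise_lim iterate) e.
Proof.
  apply uniform_cauchy_converges. intros e' He'.
  destruct (iterate_uniform_cauchy (e' / 3) ltac:(lra)) as [N HN].
  exists N. intros n m Hn Hm. apply (dist01_le_weaken _ _ _ _ (HN n m Hn Hm)). lra.
Qed.

Lemma iterate_limit_cont01 : cont01 (pointwise_lim iterate).
Proof.
  apply cont01_uniform_limit. intros e He.
  destruct (iterate_converges e He) as [N HN].
  exists (iterate N). split; [apply iterate_cont01 | apply HN; auto].
Qed.

Lemma iterate_limit_fixed t : 0 <= t <= 1 ->
  pointwise_lim iterate t = T (pointwise_lim iterate) t.
Proof.
  revert t. apply dist01_le_arbitrarily_small. intros e He.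
  destruct (iterate_converges (e / 2) ltac:(lra)) as [N HN].
  pose proof (T_contraction _ _ (e / 2) (iterate_cont01 N) iterate_limit_cont01 ltac:(lra)
                (HN N (le_n _))) as Hc.
  pose proof (Phi_lt (e / 2) ltac:(lra)).
  apply (dist01_le_weaken _ _ _ _
           (dist01_le_trans _ _ _ _ _ (dist01_le_sym _ _ _ (HN (S N) (le_S _ _ (le_n _)))) Hc)).
  lra.
Qed.
End Iterates.

Theorem meir_keeler_fixed_point x0 : cont01 x0 ->
  exists x, cont01 x /\ forall t, 0 <= t <= 1 -> x t = T x t.
Proof.
  intros Cx0. exists (pointwise_lim (fun n => Nat.iter n T x0)).
  split; [apply iterate_limit_cont01 | apply iterate_limit_fixed]; exact Cx0.
Qed.
End MeirKeeler.
End PhiClass.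

Lemma ex_RInt_continuous_R (f : R -> R) a b : (forall s, continuous f s) -> ex_RInt f a b.
Proof. intros H. apply (ex_RInt_continuous (V := R_CompleteNormedModule)). auto. Qed.

Lemma continuous_of_derive (F dF : R -> R) t : is_derive F t (dF t) -> continuous F t.
Proof.
  intros H. apply (ex_derive_continuous (K := R_AbsRing) (V := R_NormedModule)).
  eexists; exact H.
Qed.

Lemma continuous_derivable_mult (p g : R -> R) : (forall s, ex_derive p s) ->
  (forall s, continuous g s) -> forall s, continuous (fun s => p s * g s) s.
Proof.
  intros Hp Hg s. apply (continuous_mult p g); auto.
  apply (ex_derive_continuous (K := R_AbsRing) (V := R_NormedModule)); auto.
Qed.

Ltac fold_Derive H := match type of H with is_derive ?F ?t ?v =>
  replace (Derive (fun x : R => F x) t) with v by (symmetry; apply is_derive_unique; exact H) end.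

Section GreenIntegral.
Variable g : R -> R.
Hypothesis Hg : forall s, continuous g s.

Definition int_g t := RInt g 0 t.
Definition int_sq_g t := RInt (fun s => s ^ 2 * g s) 0 t.
Definition int_cosq_g t := RInt (fun s => (1 - s) ^ 2 * g s) t 1.

Definition green_pot t := / 2 * (1 - t) * (t * int_g t - int_sq_g t) + / 2 * t * int_cosq_g t.
Definition green_pot1 t := / 2 * ((1 - 2 * t) * int_g t + int_sq_g t + int_cosq_g t).
Definition green_pot2 t := - int_g t.

Let sq_g_cont : forall s, continuous (fun s => s ^ 2 * g s) s.
Proof. apply continuous_derivable_mult; auto. intros; auto_derive; auto. Qed.
Let cosq_g_cont : forall s, continuous (fun s => (1 - s) ^ 2 * g s) s.
Proof. apply continuous_derivable_mult; auto. intros; auto_derive; auto. Qed.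

Let is_RInt_continuous (h : R -> R) a b : (forall s, continuous h s) ->
  is_RInt h a b (RInt h a b).
Proof.
  intros Hh. apply (RInt_correct (V := R_CompleteNormedModule)), ex_RInt_continuous_R; auto.
Qed.

Lemma is_derive_int_g t : is_derive int_g t (g t).
Proof.
  apply is_derive_RInt with 0; auto.
  apply filter_forall; intros; apply is_RInt_continuous; auto.
Qed.

Lemma is_derive_int_sq_g t : is_derive int_sq_g t (t ^ 2 * g t).
Proof.
  apply (is_derive_RInt (fun s => s ^ 2 * g s)) with 0; auto.
  apply filter_forall; intros; apply is_RInt_continuous; auto.
Qed.

Lemma is_derive_int_cosq_g t : is_derive int_cosq_g t (- ((1 - t) ^ 2 * g t)).
Proof.
  apply (is_derive_RInt' (fun s => (1 - s) ^ 2 * g s)) with 1; auto.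
  apply filter_forall; intros; apply is_RInt_continuous; auto.
Qed.

Lemma is_derive_green_pot t : is_derive green_pot t (green_pot1 t).
Proof.
  pose proof (is_derive_int_g t) as Ha. pose proof (is_derive_int_sq_g t) as Hb.
  pose proof (is_derive_int_cosq_g t) as Hc.
  unfold green_pot. auto_derive.
  - repeat split; eexists; eassumption.
  - fold_Derive Ha. fold_Derive Hb. fold_Derive Hc. unfold green_pot1. ring.
Qed.

Lemma is_derive_green_pot1 t : is_derive green_pot1 t (green_pot2 t).
Proof.
  pose proof (is_derive_int_g t) as Ha. pose proof (is_derive_int_sq_g t) as Hb.
  pose proof (is_derive_int_cosq_g t) as Hc.
  unfold green_pot1. auto_derive.
  - repeat split; eexists; eassumption.
  - fold_Derive Ha. fold_Derive Hb. fold_Derive Hc. unfold green_pot2. field.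
Qed.

Lemma is_derive_green_pot2 t : is_derive green_pot2 t (- g t).
Proof.
  pose proof (is_derive_int_g t) as Ha. unfold green_pot2. auto_derive.
  - repeat split; eexists; eassumption.
  - fold_Derive Ha. ring.
Qed.

Lemma green_pot_0 : green_pot 0 = 0.
Proof. unfold green_pot, int_g, int_sq_g, int_cosq_g. rewrite !RInt_point.
  change (@zero R_CompleteNormedModule) with 0. ring.
Qed.

Lemma green_pot_1 : green_pot 1 = 0.
Proof. unfold green_pot, int_g, int_sq_g, int_cosq_g. rewrite !RInt_point.
  change (@zero R_CompleteNormedModule) with 0. ring.
Qed.

Lemma green_pot2_0 : green_pot2 0 = 0.
Proof. unfold green_pot2, int_g. rewrite RInt_point.
  change (@zero R_CompleteNormedModule) with 0. ring.
Qed.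

Let G_left t s : s <= t -> G t s = / 2 * (1 - t) * (t - s ^ 2).
Proof. intros H. unfold G. destruct Rle_dec; [reflexivity | lra]. Qed.
Let G_right t s : t < s -> G t s = / 2 * t * (1 - s) ^ 2.
Proof. intros H. unfold G. destruct Rle_dec; [lra | reflexivity]. Qed.

Lemma ex_RInt_green t : 0 <= t <= 1 -> ex_RInt (fun s => G t s * g s) 0 1.
Proof.
  intros Ht. apply (ex_RInt_Chasles _ 0 t 1).
  - apply (ex_RInt_ext (fun s => / 2 * (1 - t) * (t - s ^ 2) * g s)).
    + intros s Hs. rewrite Rmin_left, Rmax_right in Hs by lra. rewrite G_left by lra. reflexivity.
    + apply ex_RInt_continuous_R, continuous_derivable_mult; auto. intros; auto_derive; auto.
  - apply (ex_RInt_ext (fun s => / 2 * t * (1 - s) ^ 2 * g s)).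
    + intros s Hs. rewrite Rmin_left, Rmax_right in Hs by lra. rewrite G_right by lra. reflexivity.
    + apply ex_RInt_continuous_R, continuous_derivable_mult; auto. intros; auto_derive; auto.
Qed.

Lemma RInt_green t : 0 <= t <= 1 -> RInt (fun s => G t s * g s) 0 1 = green_pot t.
Proof.
  intros Ht.
  set (P1 := fun s => / 2 * (1 - t) * (t * g s - s ^ 2 * g s)).
  set (P2 := fun s => / 2 * t * ((1 - s) ^ 2 * g s)).
  assert (X1 : forall s, continuous (fun s => t * g s - s ^ 2 * g s) s).
  { intros s. apply (continuous_minus (fun s => t * g s)); auto.
    apply (continuous_mult (fun _ => t)); auto using continuous_const. }
  assert (X2 : forall s, continuous (fun s => t * g s) s).
  { intros s. apply (continuous_mult (fun _ => t)); auto using continuous_const. }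
  rewrite <- (RInt_Chasles _ 0 t 1), <- (RInt_ext P1 _ 0 t), <- (RInt_ext P2 _ t 1).
  - unfold P1, P2. rewrite !(RInt_scal (V := R_CompleteNormedModule));
      try apply ex_RInt_continuous_R; auto.
    rewrite (is_RInt_unique _ 0 t (t * int_g t - int_sq_g t)).
    + reflexivity.
    + apply (is_RInt_minus (V := R_NormedModule)); [|apply is_RInt_continuous; auto].
      apply (is_RInt_scal (V := R_NormedModule)), is_RInt_continuous; auto.
  - intros s Hs. rewrite Rmin_left, Rmax_right in Hs by lra. rewrite G_right by lra.
    unfold P2; simpl; ring.
  - intros s Hs. rewrite Rmin_left, Rmax_right in Hs by lra. rewrite G_left by lra.
    unfold P1; simpl; ring.
  - apply (ex_RInt_Chasles_1 _ 0 t 1); [lra | apply ex_RInt_green; auto].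
  - apply (ex_RInt_Chasles_2 _ 0 t 1); [lra | apply ex_RInt_green; auto].
Qed.
End GreenIntegral.

Lemma G_nonneg t s : 0 <= t <= 1 -> 0 <= s <= 1 -> 0 <= G t s.
Proof.
  intros Ht Hs. unfold G. destruct (Rle_dec s t).
  - assert (s ^ 2 <= s) by (simpl; nra). apply Rmult_le_pos; [apply Rmult_le_pos|]; lra.
  - apply Rmult_le_pos; [apply Rmult_le_pos; lra | apply pow2_ge_0].
Qed.

Lemma RInt_G t : 0 <= t <= 1 -> RInt (fun s => G t s) 0 1 = (t - t ^ 3) / 6.
Proof.
  intros Ht. set (one := fun _ : R => 1).
  assert (Hone : forall s, continuous one s) by (intros; apply continuous_const).
  assert (Hsq : int_sq_g one t = t ^ 3 / 3).
  { apply is_RInt_unique. replace (t ^ 3 / 3) with (minus (t ^ 3 / 3) (0 ^ 3 / 3))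
      by (unfold minus, plus, opp; simpl; field).
    apply (is_RInt_derive (V := R_CompleteNormedModule) (fun s => s ^ 3 / 3)).
    - intros; unfold one; auto_derive; auto; field.
    - intros; apply continuous_derivable_mult; auto. intros; auto_derive; auto. }
  assert (Hcosq : int_cosq_g one t = (1 - t) ^ 3 / 3).
  { apply is_RInt_unique.
    replace ((1 - t) ^ 3 / 3) with (minus (- (1 - 1) ^ 3 / 3) (- (1 - t) ^ 3 / 3))
      by (unfold minus, plus, opp; simpl; field).
    apply (is_RInt_derive (V := R_CompleteNormedModule) (fun s => - (1 - s) ^ 3 / 3)).
    - intros; unfold one; auto_derive; auto; field.
    - intros; apply continuous_derivable_mult; auto. intros; auto_derive; auto. }
  rewrite (RInt_ext _ (fun s => G t s * one s)) by (intros; unfold one; simpl; ring).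
  rewrite RInt_green by auto.
  unfold green_pot, int_g. rewrite Hsq, Hcosq. unfold one. rewrite RInt_const.
  unfold scal; simpl; unfold mult; simpl. field.
Qed.

(* max_{[0,1]} (t - t^3)/6 = 1/(9 sqrt 3), attained at t = 1/sqrt 3; with u = sqrt 3 t the
   claim is 3u - u^3 <= 2, i.e. (u - 1)^2 (u + 2) >= 0. *)
Lemma RInt_G_le t : 0 <= t <= 1 -> 9 * sqrt 3 * RInt (fun s => G t s) 0 1 <= 1.
Proof.
  intros Ht. rewrite RInt_G by auto.
  pose proof (sqrt_lt_R0 3 ltac:(lra)) as Hs. pose proof (sqrt_sqrt 3 ltac:(lra)) as Hs2.
  set (u := sqrt 3 * t).
  assert (Hu : 0 <= u) by (unfold u; nra).
  replace (9 * sqrt 3 * ((t - t ^ 3) / 6)) with ((3 * u - u ^ 3) / 2).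
  - assert (0 <= (u - 1) ^ 2 * (u + 2)) by (apply Rmult_le_pos; [apply pow2_ge_0 | lra]). nra.
  - unfold u. replace ((sqrt 3 * t) ^ 3) with (sqrt 3 * sqrt 3 * sqrt 3 * t ^ 3) by ring.
    rewrite Hs2. field.
Qed.

Lemma locally_open01 (P : R -> Prop) t : 0 < t < 1 -> (forall y, 0 < y < 1 -> P y) -> locally t P.
Proof.
  intros Ht H. apply (locally_interval _ t 0 1); simpl; try lra.
  intros; apply H; simpl in *; lra.
Qed.

Lemma cont01_affine_of_derive u k : cont01 u -> (forall t, 0 < t < 1 -> is_derive u t k) ->
  forall t, 0 <= t <= 1 -> u t = u 0 + k * t.
Proof.
  intros Hu Hd t Ht. destruct (Req_dec t 0) as [->|Ht0]; [ring|].
  destruct (MVT_gen (fun s => u (clamp s)) 0 t (fun _ => k)) as [c [_ Hc]].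
  - rewrite Rmin_left, Rmax_right by lra. intros z Hz.
    apply (is_derive_ext_loc u); [|apply Hd; lra].
    apply locally_open01; [lra|]. intros; rewrite clamp_id; auto; lra.
  - intros. apply continuity_pt_filterlim, cont01_continuous_clamp; auto.
  - rewrite !clamp_id in Hc by lra. lra.
Qed.

Lemma cont01_diff_affine u v du dv k : cont01 u -> (forall t, continuous v t) ->
  (forall t, 0 < t < 1 -> is_derive u t (du t)) -> (forall t, 0 < t < 1 -> is_derive v t (dv t)) ->
  (forall t, 0 < t < 1 -> du t - dv t = k) ->
  forall t, 0 <= t <= 1 -> u t - v t = u 0 - v 0 + k * t.
Proof.
  intros Hu Hv Du Dv Hk.
  apply (cont01_affine_of_derive (fun t => u t - v t)); [apply cont01_minus; auto|].
  intros t Ht. rewrite <- (Hk t Ht). apply (is_derive_minus u v); auto.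
Qed.

Lemma abs_RInt_green_le g K t : 0 <= t <= 1 -> (forall s, continuous g s) ->
  (forall s, 0 < s < 1 -> Rabs (g s) <= K) ->
  Rabs (RInt (fun s => G t s * g s) 0 1) <= K * RInt (fun s => G t s) 0 1.
Proof.
  intros Ht Hg HK.
  assert (EG : ex_RInt (fun s => G t s) 0 1).
  { apply (ex_RInt_ext (fun s => G t s * 1)); [intros; simpl; ring|].
    apply (ex_RInt_green (fun _ => 1)); auto using continuous_const. }
  assert (EcG : forall c, ex_RInt (fun s => c * G t s) 0 1)
    by (intros c; apply (ex_RInt_scal (V := R_NormedModule) (fun s => G t s)); exact EG).
  assert (Hscal : forall c, RInt (fun s => c * G t s) 0 1 = c * RInt (fun s => G t s) 0 1)
    by (intros c; exact (RInt_scal _ 0 1 c EG)).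
  assert (Hbound : forall s, 0 < s < 1 -> - (K * G t s) <= G t s * g s <= K * G t s).
  { intros s Hs. apply Rabs_le_between.
    rewrite Rabs_mult, (Rabs_pos_eq (G t s)), Rmult_comm by (apply G_nonneg; lra).
    apply Rmult_le_compat_r; [apply G_nonneg; lra | auto]. }
  pose proof (ex_RInt_green g Hg t Ht) as Eh.
  apply Rabs_le. split.
  - replace (- (K * RInt (fun s => G t s) 0 1)) with (- K * RInt (fun s => G t s) 0 1) by ring.
    rewrite <- Hscal. apply RInt_le; auto; [lra|].
    intros s Hs. specialize (Hbound s Hs). lra.
  - rewrite <- Hscal. apply RInt_le; auto; [lra|].
    intros s Hs. apply Hbound; auto.
Qed.

Section GreenOperator.
Variable f : R -> R -> R.
Hypothesis Hf : cont01xR f.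

Definition green_op (x : R -> R) (t : R) : R := RInt (fun s => G t s * f s (x s)) 0 1.

(* s |-> f s (x s), extended constantly outside [0,1] so that it is continuous on R. *)
Definition nemytskii (x : R -> R) (s : R) : R := f (clamp s) (x (clamp s)).

Lemma nemytskii_continuous x : cont01 x -> forall s, continuous (nemytskii x) s.
Proof. intros Hx. apply (cont01_continuous_clamp (fun s => f s (x s))), cont01_compose; auto. Qed.

Lemma green_op_nemytskii x t : green_op x t = RInt (fun s => G t s * nemytskii x s) 0 1.
Proof.
  apply RInt_ext. intros s Hs. rewrite Rmin_left, Rmax_right in Hs by lra.
  unfold nemytskii. rewrite clamp_id by lra. reflexivity.
Qed.

Lemma green_op_green_pot x : cont01 x ->
  forall t, 0 <= t <= 1 -> green_op x t = green_pot (nemytskii x) t.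
Proof.
  intros Hx t Ht. rewrite green_op_nemytskii. apply RInt_green; auto.
  apply nemytskii_continuous; auto.
Qed.

Lemma green_op_cont01 x : cont01 x -> cont01 (green_op x).
Proof.
  intros Hx. apply (cont01_ext (green_pot (nemytskii x))).
  - apply continuous_cont01. intros t _. apply (continuous_of_derive _ (green_pot1 (nemytskii x))).
    apply is_derive_green_pot, nemytskii_continuous; auto.
  - intros. symmetry. apply green_op_green_pot; auto.
Qed.

Lemma green_op_lipschitz x y L : cont01 x -> cont01 y -> 0 <= L ->
  (forall s, 0 <= s <= 1 -> Rabs (f s (x s) - f s (y s)) <= 9 * sqrt 3 * L) ->
  dist01_le (green_op x) (green_op y) L.
Proof.
  intros Hx Hy HL Hxy t Ht.
  pose proof (nemytskii_continuous x Hx) as Cx. pose proof (nemytskii_continuous y Hy) as Cy.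
  rewrite !green_op_nemytskii.
  rewrite <- (is_RInt_unique (fun s => G t s * (nemytskii x s - nemytskii y s)) 0 1
               (RInt (fun s => G t s * nemytskii x s) 0 1
                - RInt (fun s => G t s * nemytskii y s) 0 1)).
  - apply (Rle_trans _ (9 * sqrt 3 * L * RInt (fun s => G t s) 0 1)).
    + apply abs_RInt_green_le; auto.
      * intros s. apply (continuous_minus (nemytskii x) (nemytskii y)); auto.
      * intros s Hs. unfold nemytskii. rewrite clamp_id by lra. apply Hxy; lra.
    + pose proof (RInt_G_le t Ht).
      replace (9 * sqrt 3 * L * RInt (fun s => G t s) 0 1)
        with (L * (9 * sqrt 3 * RInt (fun s => G t s) 0 1)) by ring.
      rewrite <- (Rmult_1_r L) at 2. apply Rmult_le_compat_l; lra.
  - apply (is_RInt_ext (fun s => G t s * nemytskii x s - G t s * nemytskii y s)).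
    + intros; simpl; ring.
    + apply (is_RInt_minus (V := R_NormedModule));
        apply (RInt_correct (V := R_CompleteNormedModule)), ex_RInt_green; auto.
Qed.

Lemma green_op_fixed_is_solution x : cont01 x ->
  (forall t, 0 <= t <= 1 -> x t = green_op x t) -> is_solution f x.
Proof.
  intros Hx Hfix. set (g := nemytskii x).
  assert (Hg : forall s, continuous g s) by (apply nemytskii_continuous; auto).
  assert (E : forall t, 0 <= t <= 1 -> x t = green_pot g t)
    by (intros; rewrite Hfix, green_op_green_pot; auto).
  exists (green_pot1 g), (green_pot2 g), (fun t => - g t).
  repeat match goal with |- _ /\ _ => split end; auto.
  - apply continuous_cont01; intros.
    apply (continuous_of_derive _ (green_pot2 g)), is_derive_green_pot1; auto.
  - apply continuous_cont01; intros.
    apply (continuous_of_derive _ (fun t => - g t)), is_derive_green_pot2; auto.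
  - apply continuous_cont01; intros. apply (continuous_opp g); auto.
  - intros t Ht. apply (is_derive_ext_loc (green_pot g)); [|apply is_derive_green_pot; auto].
    apply locally_open01; auto. intros; rewrite E; auto; lra.
  - intros t Ht. apply is_derive_green_pot1; auto.
  - intros t Ht. apply is_derive_green_pot2; auto.
  - intros t Ht. unfold g, nemytskii. rewrite clamp_id by lra. ring.
  - rewrite E by lra. apply green_pot_0.
  - rewrite E by lra. apply green_pot_1.
  - apply green_pot2_0.
Qed.

Lemma solution_green_op_fixed y : is_solution f y ->
  cont01 y /\ forall t, 0 <= t <= 1 -> y t = green_op y t.
Proof.
  intros [y1 [y2 [y3 [Cy [C1 [C2 [C3 [D1 [D2 [D3 [Eq [Y0 [Y1 Y20]]]]]]]]]]]]].
  split; auto. set (g := nemytskii y).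
  assert (Hg : forall s, continuous g s) by (apply nemytskii_continuous; auto).
  assert (H2 : forall t, 0 <= t <= 1 -> y2 t - green_pot2 g t = 0).
  { intros t Ht. rewrite (cont01_diff_affine y2 (green_pot2 g) y3 (fun t => - g t) 0); auto.
    - rewrite Y20, green_pot2_0. ring.
    - intros s. apply (continuous_of_derive _ (fun t => - g t)), is_derive_green_pot2; auto.
    - intros s Hs. apply is_derive_green_pot2; auto.
    - intros s Hs. pose proof (Eq s Hs). unfold g, nemytskii. rewrite clamp_id by lra. lra. }
  set (c := y1 0 - green_pot1 g 0).
  assert (H1 : forall t, 0 <= t <= 1 -> y1 t - green_pot1 g t = c).
  { intros t Ht. rewrite (cont01_diff_affine y1 (green_pot1 g) y2 (green_pot2 g) 0); auto.
    - unfold c. ring.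
    - intros s. apply (continuous_of_derive _ (green_pot2 g)), is_derive_green_pot1; auto.
    - intros s Hs. apply is_derive_green_pot1; auto.
    - intros s Hs. apply H2. lra. }
  assert (H0 : forall t, 0 <= t <= 1 -> y t - green_pot g t = c * t).
  { intros t Ht. rewrite (cont01_diff_affine y (green_pot g) y1 (green_pot1 g) c); auto.
    - rewrite Y0, green_pot_0. ring.
    - intros s. apply (continuous_of_derive _ (green_pot1 g)), is_derive_green_pot; auto.
    - intros s Hs. apply is_derive_green_pot; auto.
    - intros s Hs. apply H1. lra. }
  assert (Hc : c = 0) by (pose proof (H0 1 ltac:(lra)) as H; rewrite Y1, green_pot_1 in H; lra).
  intros t Ht. rewrite green_op_green_pot by auto. fold g.
  pose proof (H0 t Ht) as Ht0. rewrite Hc, Rmult_0_l in Ht0. lra.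
Qed.
End GreenOperator.

Theorem corollary8 (f : R -> R -> R) :
  cont01xR f ->
  (exists phi : R -> R, in_Phi phi /\
     (forall t a b, 0 <= t <= 1 -> a <= b ->
        0 <= f t b - f t a /\ f t b - f t a <= 9 * sqrt 3 * phi (b - a)) /\
     (exists x0 : R -> R, cont01 x0 /\
        forall t, 0 <= t <= 1 ->
          x0 t <= RInt (fun s => G t s * f s (x0 s)) 0 1)) ->
  exists x, is_solution f x /\
    forall y, is_solution f y -> forall t, 0 <= t <= 1 -> y t = x t.
Proof.
  intros Hf [phi [Hphi [HK [x0 [Cx0 _]]]]].
  assert (Hcontr : forall x y r, cont01 x -> cont01 y -> 0 <= r -> dist01_le x y r ->
                     dist01_le (green_op f x) (green_op f y) (phi r)).
  { intros x y r Hx Hy Hr Hxy. apply green_op_lipschitz; auto using Phi_nonneg.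
    intros s Hs. apply (Phi_increment_bound phi Hphi (f s)); auto.
    pose proof (sqrt_pos 3). lra. }
  destruct (meir_keeler_fixed_point phi Hphi (green_op f) (green_op_cont01 f Hf) Hcontr x0 Cx0)
    as [x [Cx Fx]].
  exists x. split; [apply green_op_fixed_is_solution; auto|].
  intros y Hy. destruct (solution_green_op_fixed f Hf y Hy) as [Cy Fy].
  apply (fixed_point_unique phi Hphi (green_op f) Hcontr); auto.
Qed.
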